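(* Let $\Gamma$ be a metrized graph with $4$ vertices. Then $$3\,y(\Gamma) \leq Kf(\Gamma) \leq 4\, y(\Gamma).$$
   Context: A metrized graph $\Gamma$ is a finite connected graph (multiple edges and self-loops allowed) each of whose edges is identified with a closed segment of positive length, with a finite nonempty vertex set $V(\Gamma)$ containing every point of valence $\neq2$; $L_i$ is the length of $e_i$, $r$ the effective resistance (edges as resistors of resistance equal to length). $Kf(\Gamma)=\frac12\sum_{p,q\in V(\Gamma)}r(p,q)$. For an edge $e_i$ with end points $p_i,q_i$: if $\Gamma-e_i$ (interior deleted) is connected, $R_i$ is the effective resistance between $p_i,q_i$ in $\Gamma-e_i$, $R_{a_i,p}=\hat j_{p_i}(p,q_i)$, $R_{b_i,p}=\hat j_{q_i}(p,p_i)$ with $\hat j_z(x,y)$ the voltage function of $\Gamma-e_i$ (potential at $x$ when unit current enters at $y$ and exits at $z$, potential $0$ at $z$); if $e_i$ is a bridge, $R_{a_i,p}=0,R_{b_i,p}=R_i$ for $p$ in the component of $\Gamma-e_i$ containing $p_i$ and $R_{a_i,p}=R_i,R_{b_i,p}=0$ otherwise, with every expression in $R_i$ interpreted as its limit as $R_i\to\infty$; for a self-loop $R_i=0$. For a fixed vertex $p$ (independent of choice), $y(\Gamma)=\frac14\sum_{e_i}\frac{L_iR_i^2}{(L_i+R_i)^2}+\frac34\sum_{e_i}\frac{L_i(R_{a_i,p}-R_{b_i,p})^2}{(L_i+R_i)^2}$. *)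

(* Metrized graphs are modelled combinatorially: a vertex set
   'I_n, a finite family of edges k : 'I_(nedges G), each with end points
   esrc k, edst k (self-loops and multiple edges allowed) and length elen k.
   Resistances between vertices of the metrized graph are those of the
   electrical network with resistor elen k on edge k. *)
From HB Require Import structures.
From mathcomp Require Import all_boot all_order all_algebra.
Set Implicit Arguments. Unset Strict Implicit. Unset Printing Implicit Defensive.
Import Order.TTheory GRing.Theory Num.Theory.
Local Open Scope ring_scope.

Record mgraph (R : Type) (n : nat) := MGraph {
  nedges : nat;
  esrc : 'I_nedges -> 'I_n;
  edst : 'I_nedges -> 'I_n;
  elen : 'I_nedges -> R }.
Arguments nedges {R n} m : rename.
Arguments esrc {R n} m _ : rename.
Arguments edst {R n} m _ : rename.
Arguments elen {R n} m _ : rename.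

Section MetrizedGraph.
Variables (R : realFieldType) (n : nat) (G : mgraph R n).
Local Notation E := 'I_(nedges G).

Definition inc (x : 'I_n) (k : E) : R :=
  (x == esrc G k)%:R - (x == edst G k)%:R.

Definition lap (S : pred E) : 'M[R]_n :=
  \matrix_(x, y) \sum_(k | S k) (elen G k)^-1 * inc x k * inc y k.

Definition adj (S : pred E) : rel 'I_n := fun x y =>
  [exists k : E, S k && (((esrc G k == x) && (edst G k == y))
                      || ((esrc G k == y) && (edst G k == x)))].

Definition connectedb (S : pred E) : bool :=
  [forall x, forall y, connect (adj S) x y].

(* Voltage function j_z(x,y) of the (connected) network S: the potential at x
   when unit current enters at y and exits at z, potential 0 at z.  It is the
   x-coordinate of the unique v with  lap S *m v = e_y - e_z  and  v z = 0,
   i.e. the solution of (lap S + e_z e_z^T) v = e_y - e_z. *)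
Definition volt (S : pred E) (z x y : 'I_n) : R :=
  let M := invmx (lap S + delta_mx z z) in M x y - M x z.

Definition reff (S : pred E) (x y : 'I_n) : R := volt S y x x.

Definition all_edges : pred E := predT.
Definition del (i : E) : pred E := fun k => k != i.

Definition Kf : R :=
  2^-1 * \sum_(p : 'I_n) \sum_(q : 'I_n) reff all_edges p q.

Definition is_bridge (i : E) : bool := ~~ connectedb (del i).

Definition Ri (i : E) : R := reff (del i) (esrc G i) (edst G i).
Definition Rai (i : E) (p : 'I_n) : R := volt (del i) (esrc G i) p (edst G i).
Definition Rbi (i : E) (p : 'I_n) : R := volt (del i) (edst G i) p (esrc G i).

(* For a bridge, both summands are replaced by their limit L_i as R_i -> oo
   (with R_a = 0, R_b = R_i or R_a = R_i, R_b = 0). *)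
Definition yterm1 (i : E) : R :=
  if is_bridge i then elen G i
  else elen G i * (Ri i) ^+ 2 / (elen G i + Ri i) ^+ 2.

Definition yterm2 (i : E) (p : 'I_n) : R :=
  if is_bridge i then elen G i
  else elen G i * (Rai i p - Rbi i p) ^+ 2 / (elen G i + Ri i) ^+ 2.

Definition y_inv (p : 'I_n) : R :=
  4^-1 * \sum_(i : E) yterm1 i + 3 / 4 * \sum_(i : E) yterm2 i p.

End MetrizedGraph.

Arguments inc {R n} G.
Arguments lap {R n} G.
Arguments adj {R n} G.
Arguments connectedb {R n} G.
Arguments volt {R n} G.
Arguments reff {R n} G.
Arguments all_edges {R n} G.
Arguments del {R n} G.
Arguments Kf {R n} G.
Arguments is_bridge {R n} G.
Arguments Ri {R n} G.
Arguments Rai {R n} G.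
Arguments Rbi {R n} G.
Arguments yterm1 {R n} G.
Arguments yterm2 {R n} G.
Arguments y_inv {R n} G.

(* For an edge e from a to b, let w_e = [cpot e] be the mean-zero potential of
   a unit current entering at a and leaving at b, and c_e = [cond e].  Then
   r(p,q) = sum_e c_e (w_e p - w_e q)^2, hence Kf = n sum_e c_e |w_e|^2.
   Reinserting e into Gamma - e (for a bridge: letting R_e -> oo) expresses
   R_e, R_(a_e,p), R_(b_e,p) through w_e, and expanding functions in the w_e
   gives sum_e c_e (w_e a_e + w_e b_e) w_e p = sum_e c_e (w_e p)^2 - Kf / n^2,
   which eliminates p: y = sum_e c_e Y_e where Y_e only depends on w_e a_e,
   w_e b_e and |w_e|^2.  By the maximum principle w_e takes its extreme values
   at a_e and b_e, and for four mean-zero values between them elementary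
   inequalities give 3 Y_e <= 4 |w_e|^2 <= 4 Y_e. *)

From HB Require Import structures.
From mathcomp Require Import all_boot all_order all_algebra.
From mathcomp Require Import ring lra.
Set Implicit Arguments. Unset Strict Implicit. Unset Printing Implicit Defensive.
Import Order.TTheory GRing.Theory Num.Theory.
Local Open Scope ring_scope.

Lemma sum_sqr_diff (R : realFieldType) (n : nat) (f : 'I_n -> R) :
  \sum_p \sum_q (f p - f q) ^+ 2 = 2 * n%:R * \sum_x f x ^+ 2 - 2 * (\sum_x f x) ^+ 2.
Proof.
have row_sum p : \sum_q (f p - f q) ^+ 2 =
    n%:R * f p ^+ 2 - 2 * f p * \sum_x f x + \sum_x f x ^+ 2.
  transitivity (\sum_q (f p ^+ 2 - 2 * f p * f q + f q ^+ 2)).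
    by apply: eq_bigr => q _; ring.
  by rewrite big_split sumrB /= sumr_const card_ord -mulr_sumr -[_ *+ n]mulr_natl.
under eq_bigr do rewrite row_sum.
rewrite big_split sumrB /= -mulr_sumr -mulr_suml -mulr_sumr sumr_const card_ord.
by rewrite -[_ *+ n]mulr_natl; ring.
Qed.

Section Laplacian.
Variables (R : realFieldType) (n : nat) (G : mgraph R n).
Hypothesis elen_gt0 : forall k, 0 < elen G k.
Local Notation E := 'I_(nedges G).
Local Notation glap S z := (lap G S + delta_mx z z).

Definition cond (k : E) : R := (elen G k)^-1.
Definition ediff (k : E) (v : 'I_n -> R) : R := v (esrc G k) - v (edst G k).
Definition lapv (S : pred E) (v : 'I_n -> R) (x : 'I_n) : R :=
  \sum_y lap G S x y * v y.

Lemma cond_gt0 k : 0 < cond k.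
Proof. by rewrite invr_gt0. Qed.

Lemma cond_neq0 k : cond k != 0.
Proof. exact: lt0r_neq0 (cond_gt0 k). Qed.

Lemma cond_sqr_ge0 k r : 0 <= cond k * r ^+ 2.
Proof. by rewrite mulr_ge0 ?sqr_ge0 // ltW ?cond_gt0. Qed.

Lemma sum_delta (a : 'I_n) (v : 'I_n -> R) : \sum_x (x == a)%:R * v x = v a.
Proof.
rewrite (bigD1 a) //= eqxx mul1r big1 ?addr0 // => x /negbTE ->.
by rewrite mul0r.
Qed.

Lemma sum_delta_mulr (a : 'I_n) (v : 'I_n -> R) : \sum_x v x * (x == a)%:R = v a.
Proof. by rewrite -(sum_delta a v); apply: eq_bigr => x _; rewrite mulrC. Qed.

Lemma sum_delta1 (a : 'I_n) : \sum_x (x == a)%:R = 1 :> R.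
Proof. by rewrite -[RHS](sum_delta a (fun=> 1)); apply: eq_bigr => x _; rewrite mulr1. Qed.

Lemma sum_inc k v : \sum_x inc G x k * v x = ediff k v.
Proof.
rewrite /inc /ediff -(sum_delta (esrc G k)) -(sum_delta (edst G k)) -sumrB.
by apply: eq_bigr => x _; rewrite mulrBl.
Qed.

Lemma lapvE S v x : lapv S v x = \sum_(k | S k) cond k * inc G x k * ediff k v.
Proof.
rewrite /lapv; under eq_bigr => y _ do rewrite mxE mulr_suml.
rewrite exchange_big /=; apply: eq_bigr => k _.
by rewrite -sum_inc big_distrr; apply: eq_bigr => y _ /=; rewrite -!mulrA.
Qed.

Lemma sum_mul_lapv S f v :
  \sum_x f x * lapv S v x = \sum_(k | S k) cond k * ediff k f * ediff k v.
Proof.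
under eq_bigr do rewrite lapvE big_distrr.
rewrite exchange_big /=; apply: eq_bigr => k _.
rewrite -(sum_inc k f) mulr_sumr mulr_suml; apply: eq_bigr => y _ /=; ring.
Qed.

Lemma sum_mul_lapvC S f v : \sum_x f x * lapv S v x = \sum_x v x * lapv S f x.
Proof. by rewrite !sum_mul_lapv; apply: eq_bigr => k _; ring. Qed.

Lemma sum_lapv S v : \sum_x lapv S v x = 0.
Proof.
have := sum_mul_lapv S (fun _ => 1) v; under eq_bigr do rewrite mul1r.
by move=> ->; apply: big1 => k _; rewrite /ediff subrr mulr0 mul0r.
Qed.

Lemma lapv_sum S (I : finType) (a : I -> R) (w : I -> 'I_n -> R) x :
  lapv S (fun y => \sum_i a i * w i y) x = \sum_i a i * lapv S (w i) x.
Proof.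
rewrite /lapv; under eq_bigr do rewrite big_distrr.
rewrite exchange_big /=; apply: eq_bigr => i _.
by rewrite big_distrr; apply: eq_bigr => y _ /=; ring.
Qed.

Lemma lapvB S v w x : lapv S (fun y => v y - w y) x = lapv S v x - lapv S w x.
Proof. by rewrite /lapv -sumrB; apply: eq_bigr => y _ /=; ring. Qed.

Lemma lapvN S v x : lapv S (fun y => - v y) x = - lapv S v x.
Proof. by rewrite /lapv -sumrN; apply: eq_bigr => y _; rewrite mulrN. Qed.

Lemma lapvMr S a v x : lapv S (fun y => v y * a) x = lapv S v x * a.
Proof. by rewrite /lapv big_distrl; apply: eq_bigr => y _ /=; ring. Qed.

Lemma lapv_cst S a x : lapv S (fun _ => a) x = 0.
Proof. by rewrite lapvE big1 // => k _; rewrite /ediff subrr mulr0. Qed.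

Lemma adj_sym S : symmetric (adj G S).
Proof.
by move=> x y; apply/existsP/existsP => -[k /andP[Sk H]]; exists k;
  rewrite Sk /= orbC.
Qed.

Lemma ediff0_const S v : connectedb G S ->
  (forall k, S k -> ediff k v = 0) -> forall x y, v x = v y.
Proof.
move=> /forallP connS dv0 x y.
have closed_v : closed (adj G S) [pred z | v z == v x].
  move=> a b /existsP[k /andP[Sk /orP[]/andP[/eqP <- /eqP <-]]];
    by move/eqP: (dv0 k Sk); rewrite subr_eq0 !inE => /eqP ->.
by have := closed_connect closed_v (forallP (connS x) y); rewrite !inE eqxx => /esym/eqP.
Qed.

Lemma harmonic_const S v : connectedb G S -> (forall x, lapv S v x = 0) ->
  forall x y, v x = v y.
Proof.
move=> connS harm_v; apply: (ediff0_const connS) => k Sk.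
have energy0 : \sum_(i | S i) cond i * ediff i v * ediff i v = 0.
  by rewrite -sum_mul_lapv big1 // => z _; rewrite harm_v mulr0.
have energy_ge0 i : S i -> 0 <= cond i * ediff i v * ediff i v.
  by rewrite -mulrA -expr2 cond_sqr_ge0.
move: (psumr_eq0P energy_ge0 energy0 Sk) => /eqP.
by rewrite -mulrA -expr2 mulf_eq0 (negbTE (cond_neq0 k)) sqrf_eq0 => /eqP.
Qed.

Lemma mul_grounded_lap S z v k :
  \sum_y glap S z k y * v y = lapv S v k + (k == z)%:R * v z.
Proof.
rewrite /lapv -(sum_delta z (fun y => (k == z)%:R * v y)) -big_split /=.
by apply: eq_bigr => y _; rewrite !mxE mulrDl mulrA -natrM mulnb andbC.
Qed.

Lemma grounded_lap_sym S z x y :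
  glap S z x y = glap S z y x.
Proof. by rewrite !mxE andbC; congr (_ + _); apply: eq_bigr => k _; ring. Qed.

(* Summing the equations over all vertices kills the Laplacian part. *)
Lemma grounded_eq S z v f :
  (forall k, lapv S v k + (k == z)%:R * v z = f k) -> \sum_k f k = 0 ->
  v z = 0 /\ forall k, lapv S v k = f k.
Proof.
move=> eq_vf sum_f0.
have vz0 : v z = 0.
  by rewrite -sum_f0 -(eq_bigr _ (fun k _ => eq_vf k)) big_split /= sum_lapv add0r
    -[LHS](sum_delta z (fun=> v z)).
by split=> // k; rewrite -eq_vf vz0 mulr0 addr0.
Qed.

Lemma grounded_lap_unit S z : connectedb G S -> glap S z \in unitmx.
Proof.
move=> connS; rewrite -row_free_unit -kermx_eq0; apply/eqP/row_matrixP => i.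
set u := row i _; pose v y := u 0 y.
have uA0 k : (u *m glap S z) 0 k = 0.
  by rewrite -row_mul mulmx_ker row0 mxE.
have [vz0 harm_v] : v z = 0 /\ forall k, lapv S v k = 0.
  apply: (grounded_eq (f := fun=> 0)); last by rewrite big1.
  move=> k; rewrite -mul_grounded_lap -[RHS](uA0 k) mxE.
  by apply: eq_bigr => y _; rewrite grounded_lap_sym mulrC.
apply/rowP => j; rewrite row0 [RHS]mxE.
exact: etrans (harmonic_const connS harm_v j z) vz0.
Qed.

Lemma volt_lapv S z y : connectedb G S ->
  volt G S z z y = 0 /\
  forall k, lapv S (fun x => volt G S z x y) k = (k == y)%:R - (k == z)%:R.
Proof.
move=> connS; apply: (grounded_eq (v := fun x => volt G S z x y));
  last by rewrite sumrB !sum_delta1 subrr.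
move=> k; rewrite -mul_grounded_lap.
have := congr1 (fun M : 'M_n => M k y - M k z) (mulmxV (grounded_lap_unit z connS)).
by rewrite !mxE => <-; rewrite -sumrB; apply: eq_bigr => x _; rewrite mulrBr.
Qed.

Lemma volt_unique S z y v : connectedb G S ->
  (forall k, lapv S v k = (k == y)%:R - (k == z)%:R) -> v z = 0 ->
  forall x, volt G S z x y = v x.
Proof.
move=> connS lap_v vz0 x; have [voltz0 lap_volt] := volt_lapv z y connS.
have harm k : lapv S (fun x => volt G S z x y - v x) k = 0.
  by rewrite lapvB lap_volt lap_v subrr.
by apply/eqP; rewrite -subr_eq0 (harmonic_const connS harm x z) voltz0 vz0 subrr.
Qed.

Lemma lapv_term_ge0_at_max (v : 'I_n -> R) x k : (forall y, v y <= v x) ->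
  0 <= cond k * inc G x k * ediff k v.
Proof.
move=> max_x; rewrite -mulrA mulr_ge0 ?(ltW (cond_gt0 k)) // /inc /ediff.
case: (eqVneq x (esrc G k)) => [<-|_]; case: (eqVneq x (edst G k)) => [<-|_] /=.
- by rewrite subrr mul0r.
- by rewrite subr0 mul1r subr_ge0.
- by rewrite sub0r mulNr mul1r oppr_ge0 subr_le0.
- by rewrite subrr mul0r.
Qed.

(* At a maximum every term of the Laplacian is nonnegative, so if the
   Laplacian is nonpositive there, all neighbours are maxima too. *)
Lemma max_adj S (v : 'I_n -> R) x y : (forall y, v y <= v x) ->
  lapv S v x <= 0 -> adj G S x y -> v y = v x.
Proof.
move=> max_x lap_le0 /existsP[k /andP[Sk xky]].
have terms_ge0 i : S i -> 0 <= cond i * inc G x i * ediff i v.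
  by move=> _; apply: lapv_term_ge0_at_max.
have lap0 : \sum_(i | S i) cond i * inc G x i * ediff i v = 0.
  by apply/eqP; rewrite eq_le -lapvE lap_le0 lapvE sumr_ge0.
have /eqP := psumr_eq0P terms_ge0 lap0 Sk.
case: (eqVneq x y) => [<- //|x_neq_y].
rewrite /inc /ediff mulf_eq0 mulf_eq0 (negbTE (cond_neq0 k)) /=.
case/orP: xky => /andP[/eqP-> /eqP->];
  by rewrite eqxx (negbTE x_neq_y) ?subr0 ?sub0r ?oppr_eq0 oner_eq0 subr_eq0 => /eqP ->.
Qed.

Lemma max_principle S (v : 'I_n -> R) a : connectedb G S ->
  (forall k, k != a -> lapv S v k <= 0) -> forall k, v k <= v a.
Proof.
move=> /forallP connS sublap k.
case: (@arg_maxP _ _ _ a predT v isT) => m _ max_m.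
have [le_ma|lt_am] := leP (v m) (v a); first exact: le_trans (max_m k isT) le_ma.
have closed_max : closed (adj G S) [pred z | v z == v m].
  suff spread z w : v z = v m -> adj G S z w -> v w = v m.
    by move=> z w zw; rewrite !inE; apply/eqP/eqP => [/spread|/spread]; apply;
      rewrite // adj_sym.
  move=> vzm zw; rewrite -vzm; apply: max_adj zw => [y|]; first by rewrite vzm; apply: max_m.
  by apply: sublap; apply: contraTneq lt_am => <-; rewrite vzm ltxx.
move: (closed_connect closed_max (forallP (connS m) a)); rewrite !inE eqxx.
by move=> /esym/eqP vam; move: lt_am; rewrite vam ltxx.
Qed.

Lemma reff_energy S x y : connectedb G S ->
  reff G S x y = \sum_k volt G S y k x * lapv S (fun k => volt G S y k x) k.
Proof.
move=> connS; have [volt0 lap_volt] := volt_lapv y x connS.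
under eq_bigr do rewrite lap_volt mulrBr.
by rewrite sumrB !sum_delta_mulr volt0 subr0.
Qed.

Lemma reff_ge0 S x y : connectedb G S -> 0 <= reff G S x y.
Proof.
move=> connS; rewrite reff_energy // sum_mul_lapv sumr_ge0 // => k _.
by rewrite -mulrA -expr2 cond_sqr_ge0.
Qed.

Hypothesis connG : connectedb G (all_edges G).

Definition pot (e : E) (x : 'I_n) : R :=
  volt G (all_edges G) (edst G e) x (esrc G e).

Lemma pot_lapv e :
  pot e (edst G e) = 0 /\ forall k, lapv (all_edges G) (pot e) k = inc G k e.
Proof. exact: volt_lapv. Qed.

Lemma lapv_del e v k :
  lapv (all_edges G) v k = lapv (del G e) v k + cond e * inc G k e * ediff e v.
Proof. by rewrite !lapvE (bigD1 e) //= addrC. Qed.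

Lemma bridge_disconnected e : is_bridge G e ->
  ~~ connect (adj G (del G e)) (esrc G e) (edst G e).
Proof.
move=> bridge_e; apply/negP => conn_ab; move/negP: bridge_e; apply.
apply/forallP => x; apply/forallP => y.
apply: connect_sub (forallP (forallP connG x) y) => u w /existsP[k /andP[_ ukw]].
case: (eqVneq k e) ukw => [->|k_neq_e] ukw; last first.
  by apply: connect1; apply/existsP; exists k; rewrite /del k_neq_e ukw.
case/orP: ukw => /andP[/eqP <- /eqP <-] //.
by rewrite (sym_connect_sym (adj_sym _)).
Qed.

(* Across a bridge all the current flows through [e], so the potential is
   [elen e] on the side of [esrc e] and [0] on the other side. *)
Lemma pot_bridge e : is_bridge G e -> forall x,
  pot e x = elen G e * (connect (adj G (del G e)) (esrc G e) x)%:R.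
Proof.
move=> /bridge_disconnected nconn_ab.
apply: volt_unique => //; last by rewrite (negbTE nconn_ab) mulr0.
move=> k; rewrite lapvE (bigD1 e) //= big1 ?addr0 => [|f /= f_neq_e].
  rewrite /ediff connect0 (negbTE nconn_ab) mulr1 mulr0 subr0.
  by rewrite mulrAC /cond mulVf ?mul1r // lt0r_neq0.
have adj_f : adj G (del G e) (esrc G f) (edst G f).
  by apply/existsP; exists f; rewrite /del f_neq_e !eqxx.
rewrite /ediff /=; suff -> : connect (adj G (del G e)) (esrc G e) (esrc G f) =
  connect (adj G (del G e)) (esrc G e) (edst G f) by rewrite subrr mulr0.
apply/idP/idP => conn_f; apply: connect_trans conn_f (connect1 _) => //.
by rewrite adj_sym.
Qed.

Lemma yterm_bridge e p : is_bridge G e ->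
  yterm1 G e = cond e * pot e (esrc G e) ^+ 2 /\
  yterm2 G e p = cond e * (pot e (esrc G e) - 2 * pot e p) ^+ 2.
Proof.
move=> bridge_e; rewrite /yterm1 /yterm2 bridge_e !pot_bridge // connect0 /cond.
have len_neq0 : elen G e != 0 by rewrite lt0r_neq0.
by split; [|case: (connect _ _ _)]; rewrite /=; field.
Qed.

Section NonBridge.
Variable e : E.
Hypothesis nbridge_e : ~~ is_bridge G e.
Let a := esrc G e.
Let b := edst G e.
Let conn_del : connectedb G (del G e). Proof. by move: nbridge_e; rewrite negbK. Qed.
Let v x := volt G (del G e) b x a.
Let v_lapv :
  v b = 0 /\ forall k, lapv (del G e) v k = (k == a)%:R - (k == b)%:R.
Proof. exact: volt_lapv b a conn_del. Qed.

Let Ri_v : Ri G e = v a. Proof. by []. Qed.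

Let Rbi_v x : Rbi G e x = v x. Proof. by []. Qed.

Lemma Rai_nonbridge x : Rai G e x = Ri G e - v x.
Proof.
have [vb0 lap_v] := v_lapv.
rewrite /Rai -/a -/b; apply: (volt_unique (v := fun x => v a - v x)) => //.
  by move=> k; rewrite lapvB lapv_cst lap_v; ring.
by rewrite subrr.
Qed.

(* Reinserting the edge [e] in parallel to [G - e] only rescales the current:
   the fraction [1 / (1 + Ri / elen)] of it takes the route through [G - e]. *)
Lemma pot_nonbridge x : pot e x = v x / (1 + cond e * Ri G e).
Proof.
have [vb0 lap_v] := v_lapv.
have s_gt0 : 0 < 1 + cond e * Ri G e.
  by rewrite ltr_wpDr // mulr_ge0 ?reff_ge0 // ltW ?cond_gt0.
apply: (volt_unique (v := fun x => v x / (1 + cond e * Ri G e))) => //= [k|];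
  last by rewrite vb0 mul0r.
rewrite (lapv_del e) lapvMr lap_v /ediff /= -/a -/b vb0 mul0r subr0 /inc -/a -/b.
by rewrite Ri_v; field; rewrite lt0r_neq0.
Qed.

Lemma yterm_nonbridge p :
  yterm1 G e = cond e * pot e a ^+ 2 /\
  yterm2 G e p = cond e * (pot e a - 2 * pot e p) ^+ 2.
Proof.
rewrite /yterm1 /yterm2 (negbTE nbridge_e) !pot_nonbridge Rai_nonbridge.
have len_gt0 := elen_gt0 e; have Ri_ge0 : 0 <= Ri G e by apply: reff_ge0.
have len_neq0 : elen G e != 0 by rewrite lt0r_neq0.
have lenR_neq0 : elen G e + Ri G e != 0 by rewrite lt0r_neq0 // ltr_pwDl.
by rewrite Rbi_v -Ri_v /cond; split; field; rewrite len_neq0 lenR_neq0.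
Qed.

End NonBridge.

Lemma yterm_pot e p :
  yterm1 G e = cond e * pot e (esrc G e) ^+ 2 /\
  yterm2 G e p = cond e * (pot e (esrc G e) - 2 * pot e p) ^+ 2.
Proof.
by case: (boolP (is_bridge G e)) => [/yterm_bridge|/yterm_nonbridge]; apply.
Qed.

Lemma natr_n_neq0 (x : 'I_n) : n%:R != 0 :> R.
Proof. by rewrite pnatr_eq0 -lt0n (leq_ltn_trans (leq0n x) (ltn_ord x)). Qed.

Definition cpot (e : E) (x : 'I_n) : R := pot e x - (\sum_y pot e y) / n%:R.

Lemma cpot_lapv e k : lapv (all_edges G) (cpot e) k = inc G k e.
Proof. by rewrite lapvB lapv_cst subr0; case: (pot_lapv e) => _ ->. Qed.

Lemma sum_cpot e : \sum_x cpot e x = 0.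
Proof.
rewrite sumrB sumr_const card_ord -[_ *+ n]mulr_natr divfK ?subrr //.
exact: natr_n_neq0 (esrc G e).
Qed.

Lemma pot_cpot e x : pot e x = cpot e x - cpot e (edst G e).
Proof. by case: (pot_lapv e) => pot0 _; rewrite /cpot pot0; ring. Qed.

Lemma ediff_cpot_lapv e v : ediff e v = \sum_x cpot e x * lapv (all_edges G) v x.
Proof.
by rewrite -sum_inc sum_mul_lapvC; apply: eq_bigr => x _; rewrite cpot_lapv mulrC.
Qed.

Lemma ediff_cpot e f : ediff e (cpot f) = ediff f (cpot e).
Proof.
by rewrite ediff_cpot_lapv -sum_inc; apply: eq_bigr => x _; rewrite cpot_lapv mulrC.
Qed.

(* The centred potentials invert the Laplacian on mean-zero functions. *)
Lemma cpot_expansion g k :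
  \sum_e cond e * cpot e k * ediff e g = g k - (\sum_x g x) / n%:R.
Proof.
pose h x := \sum_e (cond e * ediff e g) * cpot e x.
have harm j : lapv (all_edges G) (fun x => h x - g x) j = 0.
  rewrite lapvB lapv_sum (lapvE _ g); apply/eqP; rewrite subr_eq0; apply/eqP.
  by apply: eq_bigr => e _; rewrite cpot_lapv; ring.
have sum_h : \sum_x h x = 0.
  by rewrite exchange_big big1 // => e _; rewrite -mulr_sumr sum_cpot mulr0.
have : \sum_x (h x - g x) = \sum_(x : 'I_n) (h k - g k).
  by apply: eq_bigr => x _; apply: (harmonic_const connG harm).
rewrite sumrB sum_h sumr_const card_ord -[_ *+ n]mulr_natl add0r => sum_hg.
have -> : \sum_e cond e * cpot e k * ediff e g = h k by apply: eq_bigr => e _; ring.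
apply: (mulfI (natr_n_neq0 k)); rewrite mulrBr mulrCA mulfV ?natr_n_neq0 // mulr1.
by rewrite -[\sum_x g x]opprK sum_hg; ring.
Qed.

Lemma reff_cpot p q :
  reff G (all_edges G) p q = \sum_e cond e * (cpot e p - cpot e q) ^+ 2.
Proof.
have [_ lap_volt] := volt_lapv q p connG.
rewrite reff_energy // sum_mul_lapv; apply: eq_bigr => e _.
rewrite ediff_cpot_lapv; under eq_bigr do rewrite lap_volt mulrBr.
by rewrite sumrB !sum_delta_mulr; ring.
Qed.

Lemma Kf_cpot : Kf G = n%:R * \sum_e cond e * \sum_x cpot e x ^+ 2.
Proof.
rewrite /Kf; under eq_bigr do under eq_bigr do rewrite reff_cpot.
under eq_bigr do rewrite exchange_big.
rewrite exchange_big !mulr_sumr; apply: eq_bigr => e _.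
under eq_bigr do rewrite -mulr_sumr.
by rewrite -mulr_sumr sum_sqr_diff sum_cpot; field.
Qed.

Lemma ediff_cpot_energy e :
  ediff e (fun x => \sum_f cond f * cpot f x ^+ 2) =
  cpot e (esrc G e) + cpot e (edst G e).
Proof.
transitivity (\sum_f cond f * cpot f (esrc G e) * ediff f (cpot e) +
              \sum_f cond f * cpot f (edst G e) * ediff f (cpot e)).
  rewrite [in LHS]/ediff -sumrB -big_split /=; apply: eq_bigr => f _.
  by rewrite -ediff_cpot /ediff; ring.
by rewrite !cpot_expansion sum_cpot mul0r !subr0.
Qed.

Lemma sum_cpot_cross p :
  \sum_e cond e * (cpot e (esrc G e) + cpot e (edst G e)) * cpot e p =
  \sum_e cond e * cpot e p ^+ 2 - (\sum_e cond e * \sum_x cpot e x ^+ 2) / n%:R.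
Proof.
have -> : \sum_e cond e * \sum_x cpot e x ^+ 2 =
          \sum_x \sum_e cond e * cpot e x ^+ 2.
  by rewrite exchange_big; apply: eq_bigr => e _; rewrite mulr_sumr.
rewrite -(cpot_expansion (fun x => \sum_f cond f * cpot f x ^+ 2) p).
by apply: eq_bigr => e _; rewrite ediff_cpot_energy; ring.
Qed.

Lemma yterm1_cpot e :
  yterm1 G e = cond e * (cpot e (esrc G e) - cpot e (edst G e)) ^+ 2.
Proof. by case: (yterm_pot e (esrc G e)) => -> _; rewrite pot_cpot. Qed.

Lemma sum_yterm2_cpot p : \sum_e yterm2 G e p =
  \sum_e cond e * ((cpot e (esrc G e) + cpot e (edst G e)) ^+ 2 +
                   4 / n%:R * \sum_x cpot e x ^+ 2).
Proof.
transitivity (\sum_e cond e * (cpot e (esrc G e) + cpot e (edst G e)) ^+ 2 -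
  4 * \sum_e cond e * (cpot e (esrc G e) + cpot e (edst G e)) * cpot e p +
  4 * \sum_e cond e * cpot e p ^+ 2).
  rewrite !mulr_sumr -sumrB -big_split /=; apply: eq_bigr => e _.
  by case: (yterm_pot e p) => _ ->; rewrite !pot_cpot; ring.
rewrite sum_cpot_cross; under [RHS]eq_bigr do rewrite mulrDr.
rewrite big_split /= (_ : \sum_e cond e * (4 / n%:R * _) =
  4 / n%:R * \sum_e cond e * \sum_x cpot e x ^+ 2); first by ring.
by rewrite mulr_sumr; apply: eq_bigr => e _; ring.
Qed.

Lemma y_inv_cpot p : y_inv G p = \sum_e cond e *
  ((cpot e (esrc G e) - cpot e (edst G e)) ^+ 2 / 4 +
   3 / 4 * ((cpot e (esrc G e) + cpot e (edst G e)) ^+ 2 +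
            4 / n%:R * \sum_x cpot e x ^+ 2)).
Proof.
rewrite /y_inv sum_yterm2_cpot (eq_bigr _ (fun e _ => yterm1_cpot e)).
by rewrite !mulr_sumr -big_split /=; apply: eq_bigr => e _; ring.
Qed.

Lemma cpot_le_src e x : cpot e x <= cpot e (esrc G e).
Proof.
apply: (max_principle connG) => k k_neq_src.
by rewrite cpot_lapv /inc (negbTE k_neq_src) sub0r oppr_le0 ler0n.
Qed.

Lemma cpot_ge_dst e x : cpot e (edst G e) <= cpot e x.
Proof.
rewrite -lerN2; apply: (max_principle (v := fun x => - cpot e x) connG) => k k_neq_dst.
by rewrite lapvN cpot_lapv /inc (negbTE k_neq_dst) subr0 oppr_le0 ler0n.
Qed.

End Laplacian.

Section MeanZeroBounds.
Variables (R : realFieldType) (n : nat) (v : 'I_n -> R) (a b : 'I_n).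
Hypothesis sum_v : \sum_k v k = 0.
Hypothesis v_min : forall k, v b <= v k.
Hypothesis v_max : forall k, v k <= v a.

Lemma sum_sqr_le_max_min : \sum_k v k ^+ 2 <= - (n%:R * v a * v b).
Proof.
have : 0 <= \sum_k (v a - v k) * (v k - v b).
  by apply: sumr_ge0 => k _; rewrite mulr_ge0 // subr_ge0.
rewrite (eq_bigr (fun k => (v a + v b) * v k - v a * v b - v k ^+ 2)) => [|k _]; last by ring.
rewrite sumrB sumrB -mulr_sumr sum_v sumr_const card_ord -[_ *+ n]mulr_natl.
by move=> ?; lra.
Qed.

Lemma max_min_range :
  0 <= (n%:R - 1) * v a + v b /\ v a + (n%:R - 1) * v b <= 0.
Proof.
have sum_cst c : \sum_(k : 'I_n) c = n%:R * c.
  by rewrite sumr_const card_ord -[_ *+ n]mulr_natl.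
have above_b : 0 <= \sum_(k | k != a) (v k - v b).
  by apply: sumr_ge0 => k _; rewrite subr_ge0.
have below_a : 0 <= \sum_(k | k != b) (v a - v k).
  by apply: sumr_ge0 => k _; rewrite subr_ge0.
have split_a : \sum_k (v k - v b) = v a - v b + \sum_(k | k != a) (v k - v b).
  by rewrite (bigD1 a).
have split_b : \sum_k (v a - v k) = v a - v b + \sum_(k | k != b) (v a - v k).
  by rewrite (bigD1 b).
have total_a : \sum_k (v k - v b) = - (n%:R * v b) by rewrite sumrB sum_v sum_cst sub0r.
have total_b : \sum_k (v a - v k) = n%:R * v a by rewrite sumrB sum_v sum_cst subr0.
split; lra.
Qed.

Lemma sum_sqr_ge_tangent m : a != b ->
  v a ^+ 2 + v b ^+ 2 - 2 * m * (v a + v b) - (n%:R - 2) * m ^+ 2 <= \sum_k v k ^+ 2.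
Proof.
move=> a_neq_b.
have split (F : 'I_n -> R) : \sum_k F k = F a + F b + \sum_(k | (k != a) && (k != b)) F k.
  by rewrite (bigD1 a) //= (bigD1 b) 1?eq_sym //= addrA.
have rest_ge0 : 0 <= \sum_(k | (k != a) && (k != b)) (v k - m) ^+ 2.
  by apply: sumr_ge0 => k _; apply: sqr_ge0.
have rest_expand : \sum_(k | (k != a) && (k != b)) (v k - m) ^+ 2 =
    \sum_(k | (k != a) && (k != b)) v k ^+ 2
    - 2 * m * \sum_(k | (k != a) && (k != b)) v k
    + m ^+ 2 * \sum_(k | (k != a) && (k != b)) 1.
  by rewrite !mulr_sumr -sumrB -big_split; apply: eq_bigr => k _ /=; ring.
have rest_card : \sum_(k | (k != a) && (k != b)) 1 = n%:R - 2 :> R.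
  by have := split (fun=> 1); rewrite [X in X = _]sumr_const card_ord => ?; lra.
move: rest_ge0; rewrite rest_expand rest_card.
have := split (fun k => v k ^+ 2); have := split v; rewrite sum_v => ? ?.
nra.
Qed.

End MeanZeroBounds.

Lemma mean_zero4_bounds (R : realFieldType) (v : 'I_4 -> R) a b :
  \sum_k v k = 0 -> (forall k, v b <= v k) -> (forall k, v k <= v a) ->
  3 * ((v a - v b) ^+ 2 / 4 + 3 / 4 * ((v a + v b) ^+ 2 + 4 / 4 * \sum_k v k ^+ 2))
    <= 4 * \sum_k v k ^+ 2 <=
  4 * ((v a - v b) ^+ 2 / 4 + 3 / 4 * ((v a + v b) ^+ 2 + 4 / 4 * \sum_k v k ^+ 2)).
Proof.
move=> sum_v v_min v_max.
have S_le := sum_sqr_le_max_min sum_v v_min v_max.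
have [range_a range_b] := max_min_range sum_v v_min v_max.
have S_ge0 : 0 <= \sum_k v k ^+ 2 by apply: sumr_ge0 => k _; apply: sqr_ge0.
have sqr_ab_ge0 := sqr_ge0 (v a + v b).
case: (eqVneq a b) => [eq_ab|neq_ab].
  rewrite -eq_ab in range_a range_b S_le *.
  have va0 : v a = 0 by lra.
  by rewrite va0 in S_le *; apply/andP; split; lra.
have S_ge := sum_sqr_ge_tangent sum_v (- (v a + v b) / 2) neq_ab.
have range_ab : 0 <= (3 * v a + v b) * - (v a + 3 * v b) by rewrite mulr_ge0; lra.
by apply/andP; split; lra.
Qed.


Theorem lemma3p16 (R : realFieldType) (G : mgraph R 4) :
  (forall k, 0 < elen G k) ->
  connectedb G (all_edges G) ->
  forall p : 'I_4, 3 * y_inv G p <= Kf G <= 4 * y_inv G p.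
Proof.
move=> len_gt0 connG p.
rewrite (y_inv_cpot len_gt0 connG) (Kf_cpot len_gt0 connG) !mulr_sumr.
have edge_bounds e := mean_zero4_bounds (sum_cpot e)
  (cpot_ge_dst len_gt0 connG e) (cpot_le_src len_gt0 connG e).
have cond_ge0 e := ltW (cond_gt0 len_gt0 e).
apply/andP; split; apply: ler_sum => e _; have /andP[lower upper] := edge_bounds e;
  by rewrite mulrCA [X in _ <= X]mulrCA ler_wpM2l.
Qed.
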